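(* Let $b\ge 1$ be an integer and let $c\in\mathbb{R}$ be a fixed critical value (depending only on $b$, not on $l$). For each integer $l\ge 1$ let $D_1(l),\dots,D_b(l)$ be real random variables on a probability space with probability measure $\mathbb{P}$, where $\mathbb{P}$ is the distribution under which the null hypothesis $H_{0j}$ for the fixed candidate feature $f_j$ holds. Assume: (A1) almost surely, $D_i(l+1)\le D_i(l)$ for all $i\in\{1,\dots,b\}$ and all $l\ge 1$; (A2) almost surely, for every $l$, all $D_i(l)$ are nonzero and the absolute values $|D_1(l)|,\dots,|D_b(l)|$ are pairwise distinct. Let $T^+(l)=\sum_{i=1}^b R_i(l)\,\mathbf{1}\{D_i(l)>0\}$, where $R_i(l)$ is the rank of $|D_i(l)|$ among $\{|D_1(l)|,\dots,|D_b(l)|\}$ (rank $1$ for the smallest). Define the Type I error $\alpha_j(l)=\mathbb{P}\big(T^+(l)\ge c\big)$. Then for every $l\ge 1$, \[\alpha_j(l+1)\le \alpha_j(l).\]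
   Context: Setting: a response $Y$ and candidate features $f_1,\dots,f_p$; the data are augmented with $l$ synthetic noise features $\varepsilon_1,\dots,\varepsilon_l$ drawn i.i.d. from a fixed distribution. For bootstrap replicate $i=1,\dots,b$, $I^{(i)}_j(l)$ is the importance score of $f_j$ and $I^{(i)}(\varepsilon_k;l)$ that of the $k$-th noise feature when $l$ noise features are included; $M^{(i)}(l)=\max_{1\le k\le l} I^{(i)}(\varepsilon_k;l)$ and $D_i(l)=I^{(i)}_j(l)-M^{(i)}(l)$. $T^+(l)$ is the one-sided Wilcoxon signed-rank statistic computed from $\{D_i(l)\}_{i=1}^b$, and the test rejects $H_{0j}: Y\perp\!\!\!\perp f_j$ when $T^+(l)\ge c$, with $c=c_\alpha(b)$ the Wilcoxon critical value at level $\alpha$. *)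

From HB Require Import structures.
From mathcomp Require Import all_boot all_order all_algebra.
From mathcomp Require Import all_classical all_reals all_analysis.
Set Implicit Arguments. Unset Strict Implicit. Unset Printing Implicit Defensive.
Import Order.TTheory GRing.Theory Num.Theory.
Local Open Scope ring_scope.

(* Rank of |x i| among |x 0|, ..., |x (b-1)|: 1 + number of strictly smaller
   absolute values (rank 1 for the smallest; meaningful when all |x k| are
   pairwise distinct). *)
Definition abs_rank (R : realDomainType) (b : nat) (x : 'I_b -> R) (i : 'I_b) : nat :=
  (#|[set k : 'I_b | `|x k| < `|x i|]|).+1.

Definition Tplus (R : realDomainType) (b : nat) (x : 'I_b -> R) : nat :=
  \sum_(i < b) (if (0 < x i)%R then abs_rank x i else 0%N).

From HB Require Import structures.
From mathcomp Require Import all_boot all_order all_algebra.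
From mathcomp Require Import all_classical all_reals all_analysis.
From mathcomp Require Import measurable_realfun.

Set Implicit Arguments.
Unset Strict Implicit.
Unset Printing Implicit Defensive.
Import Order.TTheory GRing.Theory Num.Theory.
Local Open Scope classical_set_scope.
Local Open Scope ring_scope.

(* When the |x_i| are pairwise distinct, x_m + x_k has the sign of whichever of
   x_m, x_k is larger in absolute value.  Counting ordered pairs (m, k) this gives
   2 T^+(x) = #{(m, k) | 0 < x_m + x_k} + #{m | 0 < x_m},
   and the right-hand side is plainly nondecreasing in x.  Hence almost surely
   T^+(D(l+1)) <= T^+(D(l)), so the event {c <= T^+(l+1)} is contained in
   {c <= T^+(l)} up to a null set. *)

Lemma lt_norm_addr_gt0 (R : realDomainType) (a c : R) :
  `|c| < `|a| -> (0 < a + c) = (0 < a).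
Proof.
rewrite ltr_norml; have [a_gt0|a_le0] := ltP 0 a.
- by rewrite gtr0_norm // => /andP[lt_ac _]; rewrite -ltrBlDl sub0r.
- rewrite ler0_norm // opprK => /andP[_ lt_ca]; apply/negbTE; rewrite -leNgt.
  by rewrite -lerBrDl sub0r ltW.
Qed.

Section WilcoxonMonotone.
Variables (R : realDomainType) (b : nat).
Implicit Types x y : 'I_b -> R.

Definition abs_distinct x := forall i k : 'I_b, i != k -> `|x i| != `|x k|.

Definition pos_dominates x (m k : 'I_b) : bool := (0 < x m) && (`|x k| < `|x m|).

Definition walsh_pos x : nat :=
  (\sum_(m < b) \sum_(k < b) nat_of_bool (0 < x m + x k)%R)%N.

Definition npos x : nat := (\sum_(m < b) nat_of_bool (0 < x m)%R)%N.

Lemma pairsum_gt0_dominates x : abs_distinct x -> forall m k,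
  nat_of_bool (0 < x m + x k) =
  (pos_dominates x m k + pos_dominates x k m + ((m == k) && (0 < x m)%R))%N.
Proof.
move=> xD m k; rewrite /pos_dominates.
have [<-|neq_mk] := eqVneq m k.
  by rewrite ltxx !andbF -mulr2n pmulrn_lgt0.
have /orP[lt_km|lt_mk] : (`|x k| < `|x m|) || (`|x m| < `|x k|).
  by rewrite -neq_lt eq_sym xD.
- rewrite (lt_norm_addr_gt0 lt_km) lt_km (lt_gtF lt_km) !andbF.
  by case: (0 < x m).
- rewrite addrC (lt_norm_addr_gt0 lt_mk) lt_mk (lt_gtF lt_mk) !andbF.
  by case: (0 < x k).
Qed.

Lemma Tplus_dominates x :
  Tplus x = (npos x + \sum_(m < b) \sum_(k < b) pos_dominates x m k)%N.
Proof.
rewrite /Tplus /npos -big_split /=; apply: eq_bigr => m _.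
rewrite /abs_rank /pos_dominates -sum1_card big_mkcond /=.
case: (0 < x m) => /=; last by rewrite big1.
by rewrite add1n; congr S; apply: eq_bigr => k _; rewrite inE; case: ltP.
Qed.

Lemma walsh_pos_dominates x : abs_distinct x ->
  walsh_pos x = ((\sum_(m < b) \sum_(k < b) pos_dominates x m k).*2 + npos x)%N.
Proof.
move=> xD; have walsh_row m : (\sum_(k < b) nat_of_bool (0 < x m + x k)%R =
    \sum_(k < b) pos_dominates x m k + \sum_(k < b) pos_dominates x k m
    + nat_of_bool (0 < x m)%R)%N.
  rewrite (eq_bigr _ (fun k _ => pairsum_gt0_dominates xD m k)) !big_split /=.
  congr (_ + _)%N; rewrite (bigD1 m) //= eqxx big1 ?addn0 // => k.
  by rewrite eq_sym => /negbTE ->.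
rewrite /walsh_pos (eq_bigr _ (fun m _ => walsh_row m)) !big_split /=.
by rewrite [X in (_ + X + _)%N]exchange_big addnn.
Qed.

Lemma Tplus_double x : abs_distinct x -> (Tplus x).*2 = (walsh_pos x + npos x)%N.
Proof.
by move=> xD; rewrite Tplus_dominates walsh_pos_dominates // doubleD addnC -addnA addnn.
Qed.

Lemma le_Tplus x y : abs_distinct x -> abs_distinct y ->
  (forall i, y i <= x i) -> (Tplus y <= Tplus x)%N.
Proof.
move=> xD yD le_yx; rewrite -leq_double (Tplus_double xD) (Tplus_double yD).
have le_gt0 (u v : R) : u <= v -> (nat_of_bool (0 < u)%R <= nat_of_bool (0 < v)%R)%N.
  by move=> le_uv; have [/lt_le_trans/(_ le_uv)->|] := ltP 0 u.
apply: leq_add; apply: leq_sum => m _; last exact: le_gt0.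
by apply: leq_sum => k _; apply/le_gt0/lerD.
Qed.

End WilcoxonMonotone.

Lemma natr_abs_rank (R : realDomainType) (S : pzSemiRingType) b (x : 'I_b -> R) i :
  (abs_rank x i)%:R = 1 + \sum_(k < b) (if `|x k| < `|x i| then 1 else 0) :> S.
Proof.
rewrite /abs_rank -sum1_card big_mkcond /= -add1n natrD natr_sum.
by congr (_ + _); apply: eq_bigr => k _; rewrite inE; case: ifP.
Qed.

Section MeasurableTplus.
Context d (T : measurableType d) (R : realType) (b : nat).
Variable x : 'I_b -> T -> R.
Hypothesis mx : forall i, measurable_fun setT (x i).

Lemma measurable_abs_rank i :
  measurable_fun setT (fun w => (abs_rank (x ^~ w) i)%:R : R).
Proof.
under eq_fun do rewrite natr_abs_rank.
apply: measurable_funD; first exact: measurable_cst.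
apply: measurable_sum => k; apply: measurable_fun_ifT => //.
by apply: measurable_fun_ltr; apply: measurableT_comp.
Qed.

Lemma measurable_Tplus : measurable_fun setT (fun w => (Tplus (x ^~ w))%:R : R).
Proof.
under eq_fun do rewrite natr_sum.
apply: measurable_sum => m; under eq_fun do rewrite (fun_if (GRing.natmul 1)).
apply: measurable_fun_ifT; last exact: measurable_cst.
- exact: measurable_fun_ltr.
- exact: measurable_abs_rank.
Qed.

Lemma measurable_Tplus_ge (c : R) : measurable [set w | c <= (Tplus (x ^~ w))%:R].
Proof.
have := measurable_fun_ler (measurable_cst c) measurable_Tplus.
by move=> /(_ measurableT [set true] I); rewrite setTI.
Qed.

End MeasurableTplus.

Lemma le_measure_ae d (T : measurableType d) (R : realType)
    (mu : {measure set T -> \bar R}) (A B : set T) :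
  measurable A -> measurable B -> {ae mu, forall w, A w -> B w} ->
  (mu A <= mu B)%E.
Proof.
move=> mA mB [N [mN muN0 AB_N]].
rewrite -(measureU0 mB mN muN0); apply: le_measure; rewrite ?inE //.
  exact: measurableU.
by move=> w Aw; have [Bw|nBw] := pselect (B w); [left|right; apply: AB_N => /(_ Aw)].
Qed.

Theorem proposition5p1 (d : measure_display) (T : measurableType d)
  (R : realType) (P : probability T R) (b : nat) (c : R)
  (D : nat -> 'I_b -> T -> R) :
  (1 <= b)%N ->
  (forall l i, measurable_fun setT (D l i)) ->
  {ae P, forall w, forall (l : nat) (i : 'I_b), (1 <= l)%N -> D l.+1 i w <= D l i w} ->
  {ae P, forall w, forall l : nat, (1 <= l)%N ->
      (forall i : 'I_b, D l i w != 0) /\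
      (forall i k : 'I_b, i != k -> `|D l i w| != `|D l k w|)} ->
  forall l : nat, (1 <= l)%N ->
    (P [set w | (c <= (Tplus (fun i => D l.+1 i w))%:R)%R] <=
     P [set w | (c <= (Tplus (fun i => D l i w))%:R)%R])%E.
Proof.
move=> _ mD decreasing distinct l l_ge1.
apply: le_measure_ae; [exact: measurable_Tplus_ge|exact: measurable_Tplus_ge|].
apply: filterS2 decreasing distinct => w le_D dist_D /= /le_trans; apply.
rewrite ler_nat le_Tplus //; [exact: (dist_D _ l_ge1).2|exact: (dist_D _ (leqW l_ge1)).2|].
by move=> i; exact: le_D.
Qed.
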